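(* Let $N\ge2$ and let $GHZ_N=|GHZ_N\rangle\langle GHZ_N|$ with $|GHZ_N\rangle=\frac{1}{\sqrt2}(|0\rangle^{\otimes N}+|1\rangle^{\otimes N})$. Then $C_S(GHZ_N)\ge\lceil\frac{N+1}{2}\rceil$.
   Context: $\mathbb{I},\sigma_X,\sigma_Y,\sigma_Z$ are the identity and Pauli matrices. The notation $\sum_\pi \mathbb{I}^{\otimes j}\otimes A^{\otimes (N-j)}$ denotes the sum, over all distinct placements, of tensor products in which exactly $j$ of the $N$ factors are $\mathbb{I}$ and the other $N-j$ are $A$ (each distinct arrangement counted once). Measurement complexity: for an $N$-qubit permutation-invariant operator $\rho$, $C_S(\rho)$ is the minimal $n_A$ such that there exist real $b_i,c_i,d_i$ and real $\alpha_{ij}$ ($1\le i\le n_A$, $0\le j\le N$) with $\rho=\sum_{i=1}^{n_A}\sum_{j=0}^{N}\alpha_{ij}\sum_\pi\mathbb{I}^{\otimes j}\otimes A_i^{\otimes(N-j)}$, $A_i=b_i\sigma_X+c_i\sigma_Y+d_i\sigma_Z$. *)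

(* Complex numbers: an arbitrary numClosedFieldType C
   (e.g. the complex numbers); "real" means x \is Num.real. *)
From HB Require Import structures.
From mathcomp Require Import all_boot all_order all_algebra.
Set Implicit Arguments. Unset Strict Implicit. Unset Printing Implicit Defensive.
Import Order.TTheory GRing.Theory Num.Theory.
Local Open Scope ring_scope.

Section Qubits.
Variable C : numClosedFieldType.

(* bit k of the computational-basis index i of an N-qubit register *)
Definition qbit (N : nat) (i : 'I_(2 ^ N)) (k : 'I_N) : 'I_2 :=
  inord (odd (i %/ 2 ^ k)%N).

(* Kronecker (tensor) product  F 0 (x) F 1 (x) ... (x) F (N-1)  *)
Definition tens (N : nat) (F : 'I_N -> 'M[C]_2) : 'M[C]_(2 ^ N) :=
  \matrix_(i, j) \prod_(k < N) F k (qbit i k) (qbit j k).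

Definition sigmaX : 'M[C]_2 :=
  \matrix_(i < 2, j < 2) (if i == j then 0 else 1).
Definition sigmaY : 'M[C]_2 :=
  \matrix_(i < 2, j < 2)
    (if i == j then 0 else if (i : nat) == 0%N then - 'i else 'i).
Definition sigmaZ : 'M[C]_2 :=
  \matrix_(i < 2, j < 2) (if i == j then (if (i : nat) == 0%N then 1 else -1) else 0).

Definition symsum (N j : nat) (A : 'M[C]_2) : 'M[C]_(2 ^ N) :=
  \sum_(S : {set 'I_N} | #|S| == j) tens (fun k => if k \in S then 1%:M else A).

(* rho admits a decomposition with nA settings A_i = b_i X + c_i Y + d_i Z *)
Definition sym_decomposable (N nA : nat) (rho : 'M[C]_(2 ^ N)) : Prop :=
  exists (b c d : 'I_nA -> C) (alpha : 'I_nA -> 'I_N.+1 -> C),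
    (forall i, b i \is Num.real) /\ (forall i, c i \is Num.real) /\
    (forall i, d i \is Num.real) /\ (forall i j, alpha i j \is Num.real) /\
    rho = \sum_(i < nA) \sum_(j < N.+1)
            alpha i j *: symsum N j (b i *: sigmaX + c i *: sigmaY + d i *: sigmaZ).

Definition ket_all (N : nat) (b : 'I_2) : 'cV[C]_(2 ^ N) :=
  \col_i (if [forall k, qbit i k == b] then 1 else 0).

Definition ghz_ket (N : nat) : 'cV[C]_(2 ^ N) :=
  (sqrtC 2)^-1 *: (ket_all N 0 + ket_all N 1).
Definition GHZ (N : nat) : 'M[C]_(2 ^ N) :=
  ghz_ket N *m (map_mx Num.conj (ghz_ket N))^T.

End Qubits.

From HB Require Import structures.
From mathcomp Require Import all_boot all_order all_algebra.
From mathcomp Require Import ring zify.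
Set Implicit Arguments. Unset Strict Implicit. Unset Printing Implicit Defensive.
Import Order.TTheory GRing.Theory Num.Theory.
Local Open Scope ring_scope.

(* We prove the stronger bound C_S(GHZ_N) >= N, from which
   C_S(GHZ_N) >= ceil((N+1)/2) follows for N >= 2.

   Look at the entries of a decomposition rho = sum_i sum_j alpha_ij
   sum_pi I^{(x)j} (x) A_i^{(x)(N-j)} at a pair of basis states x, y that
   differ in every qubit.  Identity factors vanish there, so only j = 0
   survives and the entry is  sum_i alpha_i0 prod_k A_i(x_k, y_k).  Taking
   x = 1^a 0^(N-a) and y its complement, this is the "moment"
     M_a = sum_i alpha_i0 u_i^a v_i^(N-a),  u_i = A_i(1,0), v_i = A_i(0,1),
   and u_i = conj v_i because A_i is Hermitian.  For GHZ_N these entries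
   vanish for 0 < a < N but not for a = N.  An elimination argument on
   binary forms shows that with fewer than N points (u_i, v_i), vanishing
   of M_1, ..., M_(N-1) forces M_N = 0; hence nA >= N. *)

Section BinaryFormMoments.
Variable F : fieldType.

(* M_m = sum_i c_i u_i^m v_i^(L-m): the m-th coefficient of the binary form
   sum_i c_i (u_i X + v_i Y)^L, up to binomial factors. *)
Definition moment (n : nat) (c u v : 'I_n -> F) (L m : nat) : F :=
  \sum_i c i * u i ^+ m * v i ^+ (L - m).

Lemma moment_drop_zero n (c u v : 'I_n.+1 -> F) L m :
  u ord0 = 0 -> (0 < m)%N ->
  moment c u v L m =
  moment (fun i => c (lift ord0 i)) (fun i => u (lift ord0 i))
         (fun i => v (lift ord0 i)) L m.
Proof.
move=> u0 m_gt0.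
by rewrite /moment big_ord_recl u0 expr0n gtn_eqF // mulr0 mul0r add0r.
Qed.

(* Reweighting by  v_0 u_i - u_0 v_i  kills the contribution of point 0 and
   turns consecutive moments of degree L into moments of degree L - 1. *)
Lemma moment_eliminate n (c u v : 'I_n.+1 -> F) L m : (m < L)%N ->
  moment (fun i => c (lift ord0 i) * (v ord0 * u (lift ord0 i) - u ord0 * v (lift ord0 i)))
         (fun i => u (lift ord0 i)) (fun i => v (lift ord0 i)) L.-1 m =
  v ord0 * moment c u v L m.+1 - u ord0 * moment c u v L m.
Proof.
move=> mL; rewrite /moment.
have -> : (L - m = (L.-1 - m).+1)%N by lia.
have -> : (L - m.+1 = L.-1 - m)%N by lia.
rewrite !big_ord_recl mulrDr mulrDr opprD addrACA.
have -> : v ord0 * (c ord0 * u ord0 ^+ m.+1 * v ord0 ^+ (L.-1 - m)) -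
  u ord0 * (c ord0 * u ord0 ^+ m * v ord0 ^+ (L.-1 - m).+1) = 0.
  by rewrite !exprS; ring.
rewrite add0r !mulr_sumr -sumrB; apply: eq_bigr => i _; rewrite !exprS; ring.
Qed.

Lemma moment_top_vanishes n (c u v : 'I_n -> F) L :
  (forall i, u i != 0 -> v i != 0) -> (n < L)%N ->
  (forall m, (0 < m < L)%N -> moment c u v L m = 0) ->
  moment c u v L L = 0.
Proof.
elim: n L c u v => [|n IH] L c u v uv nL Hmid; first by rewrite /moment big_ord0.
have L_gt0 : (0 < L)%N by lia.
have [u0|u0_neq0] := eqVneq (u ord0) 0.
  rewrite moment_drop_zero //; apply: IH => [i||m /andP[m_gt0 mL]]; first exact: uv.
    by lia.
  by rewrite -(@moment_drop_zero n c u v L m u0 m_gt0) Hmid ?m_gt0.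
have v0_neq0 := uv _ u0_neq0.
pose c' i := c (lift ord0 i) * (v ord0 * u (lift ord0 i) - u ord0 * v (lift ord0 i)).
have mid' m : (0 < m < L.-1)%N ->
    moment c' (fun i => u (lift ord0 i)) (fun i => v (lift ord0 i)) L.-1 m = 0.
  move=> /andP[m_gt0 mL].
  rewrite moment_eliminate; last by lia.
  by rewrite !Hmid ?mulr0 ?subr0 //; lia.
have nL' : (n < L.-1)%N by lia.
have := IH L.-1 c' _ _ (fun i => uv (lift ord0 i)) nL' mid'.
rewrite moment_eliminate ?prednK // ?ltn_predL // (Hmid L.-1); last by lia.
by rewrite mulr0 subr0 => /eqP; rewrite mulf_eq0 (negbTE v0_neq0) => /eqP.
Qed.
End BinaryFormMoments.

Lemma odd_div_ones_below a k : odd ((2 ^ a - 1) %/ 2 ^ k)%N = (k < a)%N.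
Proof.
have [ka|ak] := ltnP k a; last first.
  have le_ak : (2 ^ a <= 2 ^ k)%N by rewrite leq_exp2l.
  have pa : (0 < 2 ^ a)%N by rewrite expn_gt0.
  by rewrite divn_small //; lia.
have pk : (0 < 2 ^ k)%N by rewrite expn_gt0.
have pak : (2 <= 2 ^ (a - k))%N by rewrite -{1}(expn1 2) leq_exp2l // subn_gt0.
have split_a : (2 ^ a - 1 = (2 ^ (a - k) - 1) * 2 ^ k + (2 ^ k - 1))%N.
  have e : (2 ^ a = 2 ^ (a - k) * 2 ^ k)%N by rewrite -expnD subnK // ltnW.
  have le_k : (2 ^ k <= 2 ^ (a - k) * 2 ^ k)%N by rewrite leq_pmull // ltnW.
  rewrite e mulnBl mul1n; lia.
rewrite split_a divnMDl // divn_small ?addn0; last by lia.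
rewrite oddB; last by lia.
by rewrite oddX subn_eq0 leqNgt ka.
Qed.

Lemma odd_div_ones_from N a k : (a <= N)%N -> (k < N)%N ->
  odd ((2 ^ N - 2 ^ a) %/ 2 ^ k)%N = (a <= k)%N.
Proof.
move=> aN kN.
have -> : (2 ^ N - 2 ^ a = (2 ^ (N - a) - 1) * 2 ^ a)%N.
  by rewrite mulnBl mul1n -expnD subnK.
have [ak|ka] := leqP a k.
  rewrite -(subnK ak) expnD divnMr ?expn_gt0 // odd_div_ones_below; lia.
have -> : (2 ^ a = 2 ^ (a - k) * 2 ^ k)%N by rewrite -expnD subnK // ltnW.
by rewrite mulnA mulnK ?expn_gt0 // oddM oddX subn_eq0 leqNgt ka andbF.
Qed.

Lemma qbit_val N (x : 'I_(2 ^ N)) k : qbit x k = odd (x %/ 2 ^ k)%N :> nat.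
Proof. by rewrite /qbit inordK //; case: odd. Qed.

Lemma ones_below_subproof N a : (2 ^ minn a N - 1 < 2 ^ N)%N.
Proof.
have le_aN : (2 ^ minn a N <= 2 ^ N)%N by rewrite leq_exp2l // geq_minr.
have pa : (0 < 2 ^ minn a N)%N by rewrite expn_gt0.
lia.
Qed.

Lemma ones_from_subproof N a : (2 ^ N - 2 ^ a < 2 ^ N)%N.
Proof.
have pa : (0 < 2 ^ a)%N by rewrite expn_gt0.
have pN : (0 < 2 ^ N)%N by rewrite expn_gt0.
lia.
Qed.

(* The basis states with bits 0 .. a-1 set, resp. bits a .. N-1 set; for
   a <= N they differ in every qubit. *)
Definition ones_below N a : 'I_(2 ^ N) := Ordinal (ones_below_subproof N a).
Definition ones_from N a : 'I_(2 ^ N) := Ordinal (ones_from_subproof N a).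

Lemma qbit_ones_below N a (k : 'I_N) : qbit (ones_below N a) k = (k < a)%N :> nat.
Proof. by rewrite qbit_val odd_div_ones_below ltn_min ltn_ord andbT. Qed.

Lemma qbit_ones_from N a (k : 'I_N) : (a <= N)%N ->
  qbit (ones_from N a) k = (a <= k)%N :> nat.
Proof. by move=> aN; rewrite qbit_val odd_div_ones_from. Qed.

Section GHZEntries.
Variables (C : numClosedFieldType) (N : nat).

(* GHZ_N is a rank-one projector, so its entries factor. *)
Lemma GHZ_entry (x y : 'I_(2 ^ N)) :
  GHZ C N x y = ghz_ket C N x 0 * (ghz_ket C N y 0)^*.
Proof. by rewrite /GHZ mxE big_ord1 !mxE. Qed.

Lemma ghz_ket_mixed (x : 'I_(2 ^ N)) (k k' : 'I_N) :
  qbit x k != qbit x k' -> ghz_ket C N x 0 = 0.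
Proof.
move=> kk'; suff ket0 b : ket_all C N b x 0 = 0.
  by rewrite /ghz_ket mxE [(_ + _ : 'cV[C]__) x 0]mxE !ket0 addr0 mulr0.
rewrite mxE; case: forallP => // all_b.
by move: kk'; rewrite (eqP (all_b k)) (eqP (all_b k')) eqxx.
Qed.

Lemma ghz_ket_constant (x : 'I_(2 ^ N)) (b : 'I_2) : (0 < N)%N ->
  (forall k, qbit x k = b) -> ghz_ket C N x 0 = (sqrtC 2)^-1.
Proof.
move=> N_gt0 x_b; suff ketE b' : ket_all C N b' x 0 = (b' == b)%:R.
  rewrite /ghz_ket mxE [(_ + _ : 'cV[C]__) x 0]mxE !ketE.
  by case: b {x_b ketE} => [[|[|//]] ?]; rewrite /= ?addr0 ?add0r mulr1.
rewrite mxE; case: forallP => [all_b' | not_all_b'].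
  by rewrite -(eqP (all_b' (Ordinal N_gt0))) x_b eqxx.
by case: eqP => // b'b; case: not_all_b' => k; rewrite x_b b'b.
Qed.

Lemma GHZ_ones_mid a : (0 < a < N)%N -> GHZ C N (ones_below N a) (ones_from N a) = 0.
Proof.
move=> /andP[a_gt0 aN]; have N_gt0 := ltn_trans a_gt0 aN.
rewrite GHZ_entry (@ghz_ket_mixed _ (Ordinal N_gt0) (Ordinal aN)) ?mul0r //.
by rewrite -val_eqE /= !qbit_ones_below a_gt0 ltnn.
Qed.

Lemma GHZ_ones_top : (0 < N)%N -> GHZ C N (ones_below N N) (ones_from N N) != 0.
Proof.
move=> N_gt0; rewrite GHZ_entry (@ghz_ket_constant _ 1) // => [|k]; last first.
  by apply: ord_inj; rewrite qbit_ones_below ltn_ord.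
rewrite (@ghz_ket_constant _ 0) // => [|k]; last first.
  by apply: ord_inj; rewrite qbit_ones_from // leqNgt ltn_ord.
by rewrite mul_conjC_eq0 invr_eq0 sqrtC_eq0 pnatr_eq0.
Qed.
End GHZEntries.

Lemma prod_threshold (R : comPzSemiRingType) N a (u v : R) : (a <= N)%N ->
  \prod_(k < N) (if (k < a)%N then u else v) = u ^+ a * v ^+ (N - a).
Proof.
move=> aN; rewrite -(big_mkord xpredT (fun k => if (k < a)%N then u else v)).
rewrite (big_cat_nat (leq0n a) aN) /=.
rewrite (eq_big_nat _ _ (F2 := fun=> u)) => [|k /andP[_ ->] //].
rewrite (eq_big_nat _ _ (F1 := fun k => if (k < a)%N then u else v) (F2 := fun=> v))
  => [|k /andP[le_ak _]]; last by rewrite ltnNge le_ak.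
by rewrite !prodr_const_nat subn0.
Qed.

Section Decomposition.
Variable C : numClosedFieldType.

(* A real combination of Pauli matrices is Hermitian; we need its
   off-diagonal entries only. *)
Lemma pauli_comb_adjoint (b c d : C) : b \is Num.real -> c \is Num.real ->
  (b *: sigmaX C + c *: sigmaY C + d *: sigmaZ C) 1 0 =
  ((b *: sigmaX C + c *: sigmaY C + d *: sigmaZ C) 0 1)^*.
Proof.
move=> b_real c_real; rewrite !mxE /= !mulr0 !addr0 !mulr1.
by rewrite rmorphD rmorphM rmorphN /= conjCi !conj_Creal // opprK.
Qed.

(* Between states differing in every qubit, every identity factor vanishes,
   so only the term without identities (j = 0) survives. *)
Lemma symsum_complementary_entry N j (A : 'M[C]_2) (x y : 'I_(2 ^ N)) :
  (forall k, qbit x k != qbit y k) ->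
  symsum N j A x y = if j == 0%N then \prod_k A (qbit x k) (qbit y k) else 0.
Proof.
move=> xy; rewrite /symsum summxE; case: eqP => [->|/eqP j_neq0].
  rewrite (eq_bigl (pred1 set0)) => [|S]; last by rewrite /= cards_eq0.
  by rewrite big_pred1_eq mxE; apply: eq_bigr => k _; rewrite in_set0.
apply: big1 => S /eqP cardS; have : S != set0 by rewrite -cards_eq0 cardS.
case/set0Pn => k kS; rewrite mxE (bigD1 k) //= kS mxE.
by rewrite (negbTE (xy k)) mul0r.
Qed.

Lemma decomposition_ones_entry N nA (alpha : 'I_nA -> 'I_N.+1 -> C)
    (A : 'I_nA -> 'M[C]_2) a : (a <= N)%N ->
  (\sum_(i < nA) \sum_(j < N.+1) alpha i j *: symsum N j (A i))
    (ones_below N a) (ones_from N a) =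
  moment (fun i => alpha i ord0) (fun i => A i 1 0) (fun i => A i 0 1) N a.
Proof.
move=> aN; have bit_ones k : qbit (ones_below N a) k = (k < a)%N%:R :> 'I_2.
  by apply: ord_inj; rewrite qbit_ones_below; case: ltnP.
have bit_from k : qbit (ones_from N a) k = (a <= k)%N%:R :> 'I_2.
  by apply: ord_inj; rewrite qbit_ones_from //; case: leqP.
rewrite summxE; apply: eq_bigr => i _.
rewrite summxE big_ord_recl big1 => [|j _]; last first.
  rewrite mxE symsum_complementary_entry ?mulr0 // => k.
  by rewrite bit_ones bit_from; case: leqP.
rewrite addr0 mxE symsum_complementary_entry => [|k]; last first.
  by rewrite bit_ones bit_from; case: leqP.
rewrite /= -mulrA -prod_threshold //; congr (_ * _); apply: eq_bigr => k _.
by rewrite bit_ones bit_from; case: ltnP.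
Qed.
End Decomposition.

Lemma GHZ_settings_ge (C : numClosedFieldType) N nA : (0 < N)%N ->
  sym_decomposable nA (GHZ C N) -> (N <= nA)%N.
Proof.
move=> N_gt0 [b [c [d [alpha [b_real [c_real [_ [_ GHZ_eq]]]]]]]].
rewrite leqNgt; apply/negP => nA_lt_N.
pose A i := b i *: sigmaX C + c i *: sigmaY C + d i *: sigmaZ C.
pose mom := moment (fun i => alpha i ord0) (fun i => A i 1 0) (fun i => A i 0 1) N.
have GHZ_mom a : (a <= N)%N -> GHZ C N (ones_below N a) (ones_from N a) = mom a.
  by move=> aN; rewrite GHZ_eq decomposition_ones_entry.
have A_adj i : A i 1 0 != 0 -> A i 0 1 != 0.
  by rewrite /A pauli_comb_adjoint // conjC_eq0.
have mom_mid m : (0 < m < N)%N -> mom m = 0.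
  by move=> mN; rewrite -GHZ_mom ?GHZ_ones_mid //; case/andP: mN => _ /ltnW.
have := GHZ_ones_top C N_gt0.
by rewrite GHZ_mom // /mom (moment_top_vanishes A_adj nA_lt_N mom_mid) eqxx.
Qed.

(* C_S(GHZ_N) >= ceil((N+1)/2) = (N+2)/2, a consequence of the bound N. *)
Theorem theorem4 (C : numClosedFieldType) (N : nat) (hN : (2 <= N)%N)
  (nA : nat) :
  @sym_decomposable C N nA (@GHZ C N) -> ((N + 2) %/ 2 <= nA)%N.
Proof.
move=> /(GHZ_settings_ge (ltnW hN)) N_le_nA.
by apply: leq_trans N_le_nA; lia.
Qed.
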